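(* Let $\mathcal U$ be an unbalanced critical update family and let $K\subset\mathbb Z^2$ with $2\le|K|<\infty$ be such that $[K]$ is strongly connected. Then there is a partition $K=K_1\cup K_2$ into non-empty disjoint sets such that $[K_1]$, $[K_2]$ and $[K_1]\cup[K_2]$ are all strongly connected.
   Context: Update family $\mathcal U$: finite collection of finite subsets of $\mathbb Z^2\setminus\{0\}$; $A_0=A$, $A_{t+1}=A_t\cup\{x:x+X\subset A_t\text{ for some }X\in\mathcal U\}$, $[A]=\bigcup_tA_t$. (Unbalanced critical is as in the paper: $1\le\alpha(\mathcal U)<\infty$ and no closed semicircle of directions all have difficulty at most $\alpha(\mathcal U)$; only the choice of $\kappa$ depends on this.) $\nu=\max\{\|x-y\|:x,y\in X\cup\{0\},X\in\mathcal U\}$ and $\kappa=3\nu$. A set $S\subset\mathbb Z^2$ is strongly connected if it is connected in the graph on $\mathbb Z^2$ in which $x,y$ are adjacent iff $\|x-y\|_2\le\kappa$. *)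

From Stdlib Require Import Reals ZArith List.
Import ListNotations.
Open Scope R_scope.

Definition pt := (Z * Z)%type.
Definition padd (x y : pt) : pt := ((fst x + fst y)%Z, (snd x + snd y)%Z).

Definition update_family := list (list pt).
Definition valid_family (U : update_family) : Prop :=
  forall X, In X U -> ~ In (0%Z, 0%Z) X.

Fixpoint iter_step (U : update_family) (A : pt -> Prop) (t : nat) : pt -> Prop :=
  match t with
  | O => A
  | S t' => fun x => iter_step U A t' x \/
             exists X, In X U /\ forall y, In y X -> iter_step U A t' (padd x y)
  end.

Definition closure (U : update_family) (A : pt -> Prop) : pt -> Prop :=
  fun x => exists t, iter_step U A t x.

Definition dist2 (x y : pt) : Z :=
  ((fst x - fst y) * (fst x - fst y) + (snd x - snd y) * (snd x - snd y))%Z.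
Definition edist (x y : pt) : R := sqrt (IZR (dist2 x y)).

Definition nu (U : update_family) : R :=
  fold_right Rmax 0
    (flat_map (fun X => let P := (0%Z, 0%Z) :: X in
                 flat_map (fun x => map (fun y => edist x y) P) P) U).
Definition kappa (U : update_family) : R := 3 * nu U.

Definition adj (U : update_family) (x y : pt) : Prop := edist x y <= kappa U.

Definition strongly_connected (U : update_family) (S : pt -> Prop) : Prop :=
  forall x y, S x -> S y ->
    Relation_Operators.clos_refl_trans pt
      (fun a b => S a /\ S b /\ adj U a b) x y.

Definition direction (u : R * R) : Prop := fst u * fst u + snd u * snd u = 1.

Definition halfplane (u : R * R) : pt -> Prop :=
  fun x => IZR (fst x) * fst u + IZR (snd x) * snd u < 0.

Definition stable (U : update_family) (u : R * R) : Prop :=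
  forall x, closure U (halfplane u) x -> halfplane u x.

Definition finite_set (S : pt -> Prop) : Prop :=
  exists l : list pt, forall x, S x -> In x l.

(* alpha(u) <= k, where alpha(u) = 0 if u is unstable, and otherwise
   alpha(u) = min |Z| (possibly infinite) such that [H_u ∪ Z] \ H_u is infinite *)
Definition difficulty_le (U : update_family) (u : R * R) (k : nat) : Prop :=
  ~ stable U u \/
  exists Z : list pt, (length Z <= k)%nat /\
    ~ finite_set (fun x => closure U (fun y => halfplane u y \/ In y Z) x
                            /\ ~ halfplane u x).

Definition open_semicircle (v u : R * R) : Prop :=
  direction u /\ fst u * fst v + snd u * snd v > 0.
Definition closed_semicircle (v u : R * R) : Prop :=
  direction u /\ fst u * fst v + snd u * snd v >= 0.

(* alpha(U) = min over open semicircles C of max_{u in C} alpha(u);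
   alpha(U) <= k  iff some open semicircle has all difficulties <= k *)
Definition alpha_le (U : update_family) (k : nat) : Prop :=
  exists v, direction v /\
    forall u, open_semicircle v u -> difficulty_le U u k.

Definition unbalanced_critical (U : update_family) : Prop :=
  exists a : nat, (1 <= a)%nat /\ alpha_le U a /\ ~ alpha_le U (a - 1) /\
    ~ (exists v, direction v /\
         forall u, closed_semicircle v u -> difficulty_le U u a).

From Stdlib Require Import Reals ZArith List Lra Lia Classical Permutation.
Import ListNotations.
Open Scope R_scope.

(* Call a partition of K into non-empty blocks connected if the closure of
   every block is strongly connected; the singletons of K form one.
   Two blocks whose closures contain kappa-adjacent points can be merged: the
   union of two strongly connected sets joined by an edge is strongly
   connected, and so is the closure of any strongly connected set T with
   A ⊆ T ⊆ [A], because every newly infected point x has x + y infected for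
   some y in a (non-empty, by unbalanced criticality) rule, and
   ||y|| <= nu <= kappa.  If no two blocks can be merged, the union of their
   closures is closed under the update rules (the points x + y, x + z of one
   rule are kappa-adjacent, hence lie in the closure of one block), so a
   kappa-path in [K] never leaves the closure of the block it starts in; as
   [K] is strongly connected this is impossible with two or more blocks.
   Merging therefore continues until exactly two blocks remain. *)

Lemma fold_right_Rmax_nonneg (l : list R) : 0 <= fold_right Rmax 0 l.
Proof.
  induction l as [|r l IHl]; simpl; [lra|].
  apply Rle_trans with (fold_right Rmax 0 l); [exact IHl | apply Rmax_r].
Qed.

Lemma le_fold_right_Rmax (l : list R) (r : R) : In r l -> r <= fold_right Rmax 0 l.
Proof.
  induction l as [|s l IHl]; simpl; intros Hr; [destruct Hr|].
  destruct Hr as [<-|Hr]; [apply Rmax_l|].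
  apply Rle_trans with (fold_right Rmax 0 l); [exact (IHl Hr) | apply Rmax_r].
Qed.

Lemma padd_0_r (x : pt) : padd x (0%Z, 0%Z) = x.
Proof. destruct x as [x1 x2]. unfold padd; simpl. f_equal; ring. Qed.

Lemma edist_sym (x y : pt) : edist x y = edist y x.
Proof. unfold edist, dist2. do 2 f_equal. ring. Qed.

Lemma edist_padd2l (x y z : pt) : edist (padd x y) (padd x z) = edist y z.
Proof. unfold edist, dist2, padd; simpl. do 2 f_equal. ring. Qed.

Lemma edist_refl (x : pt) : edist x x = 0.
Proof.
  unfold edist, dist2. replace (_ + _)%Z with 0%Z by ring. apply sqrt_0.
Qed.

Section Adjacency.

Variable U : update_family.

Lemma nu_nonneg : 0 <= nu U.
Proof. apply fold_right_Rmax_nonneg. Qed.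

Lemma edist_rule_le_nu (X : list pt) (y z : pt) : In X U ->
  In y ((0%Z, 0%Z) :: X) -> In z ((0%Z, 0%Z) :: X) -> edist y z <= nu U.
Proof.
  intros HX Hy Hz. apply le_fold_right_Rmax, in_flat_map.
  exists X; split; [exact HX|].
  apply in_flat_map. exists y; split; [exact Hy|].
  apply in_map_iff. exists z; split; [reflexivity | exact Hz].
Qed.

Lemma adj_sym (x y : pt) : adj U x y -> adj U y x.
Proof. unfold adj. rewrite edist_sym. auto. Qed.

Lemma adj_refl (x : pt) : adj U x x.
Proof. unfold adj, kappa. rewrite edist_refl. pose proof nu_nonneg. lra. Qed.

Lemma adj_rule (X : list pt) (x y z : pt) : In X U ->
  In y ((0%Z, 0%Z) :: X) -> In z ((0%Z, 0%Z) :: X) -> adj U (padd x y) (padd x z).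
Proof.
  intros HX Hy Hz. unfold adj, kappa. rewrite edist_padd2l.
  pose proof (edist_rule_le_nu X y z HX Hy Hz). pose proof nu_nonneg. lra.
Qed.

Lemma adj_rule_base (X : list pt) (x y : pt) : In X U -> In y X -> adj U x (padd x y).
Proof.
  intros HX Hy. pattern x at 1. rewrite <- (padd_0_r x).
  apply adj_rule with X; simpl; auto.
Qed.

End Adjacency.

Section Closure.

Variable U : update_family.

Lemma iter_step_mono (A : pt -> Prop) (t t' : nat) (x : pt) :
  (t <= t')%nat -> iter_step U A t x -> iter_step U A t' x.
Proof. induction 1; [auto | intros Hx; left; auto]. Qed.

Lemma closure_subset (A : pt -> Prop) (x : pt) : A x -> closure U A x.
Proof. intros Hx. exists 0%nat. exact Hx. Qed.

Lemma closure_mono (A B : pt -> Prop) : (forall x, A x -> B x) ->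
  forall x, closure U A x -> closure U B x.
Proof.
  intros HAB x [t Ht]. exists t. revert x Ht.
  induction t as [|t IHt]; simpl; intros x Ht; [auto|].
  destruct Ht as [Ht|[X [HX Ht]]]; [left | right; exists X]; auto.
Qed.

Lemma closure_rule (A : pt -> Prop) (X : list pt) (x : pt) : In X U ->
  (forall y, In y X -> closure U A (padd x y)) -> closure U A x.
Proof.
  intros HX HXA.
  assert (Hsync : exists t, forall y, In y X -> iter_step U A t (padd x y)).
  { clear HX. induction X as [|y0 X IHX].
    - exists 0%nat. intros y [].
    - destruct IHX as [t Ht]; [intros y Hy; apply HXA; right; exact Hy|].
      destruct (HXA y0 (or_introl eq_refl)) as [t0 Ht0].
      exists (Nat.max t t0). intros y [<-|Hy].
      + apply iter_step_mono with t0; [lia | exact Ht0].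
      + apply iter_step_mono with t; [lia | exact (Ht y Hy)]. }
  destruct Hsync as [t Ht]. exists (S t). right. exists X. auto.
Qed.

End Closure.

Definition link (U : update_family) (S : pt -> Prop) : pt -> pt -> Prop :=
  Relation_Operators.clos_refl_trans pt (fun a b => S a /\ S b /\ adj U a b).

Section Connectivity.

Variable U : update_family.

Lemma link_sym (S : pt -> Prop) (x y : pt) : link U S x y -> link U S y x.
Proof.
  induction 1 as [x y [Hx [Hy Hxy]]| |x y z _ IHxy _ IHyz].
  - apply Relation_Operators.rt_step. auto using adj_sym.
  - apply Relation_Operators.rt_refl.
  - eapply Relation_Operators.rt_trans; eauto.
Qed.

Lemma link_mono (S T : pt -> Prop) (x y : pt) :
  (forall z, S z -> T z) -> link U S x y -> link U T x y.
Proof.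
  intros HST. induction 1 as [x y [Hx [Hy Hxy]]| |x y z _ IHxy _ IHyz].
  - apply Relation_Operators.rt_step. auto.
  - apply Relation_Operators.rt_refl.
  - eapply Relation_Operators.rt_trans; eauto.
Qed.

Lemma strongly_connected_union (S T : pt -> Prop) (a b : pt) :
  strongly_connected U S -> strongly_connected U T -> S a -> T b -> adj U a b ->
  strongly_connected U (fun x => S x \/ T x).
Proof.
  intros HS HT Ha Hb Hab.
  assert (Hto_a : forall x, S x \/ T x -> link U (fun x => S x \/ T x) x a).
  { intros x [Hx|Hx].
    - apply link_mono with S; auto. apply HS; auto.
    - eapply Relation_Operators.rt_trans.
      + apply link_mono with T; [auto|]. apply HT; [exact Hx | exact Hb].
      + apply Relation_Operators.rt_step. auto using adj_sym. }
  intros x y Hx Hy. eapply Relation_Operators.rt_trans.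
  - exact (Hto_a x Hx).
  - apply link_sym, Hto_a, Hy.
Qed.

Hypothesis rules_nonempty : forall X, In X U -> X <> [].

Lemma closure_link_seed (A : pt -> Prop) (x : pt) :
  closure U A x -> exists a, A a /\ link U (closure U A) x a.
Proof.
  intros [t Ht]. revert x Ht. induction t as [|t IHt]; simpl; intros x Ht.
  - exists x. split; [exact Ht | apply Relation_Operators.rt_refl].
  - destruct Ht as [Ht|[X [HX HXt]]]; [exact (IHt x Ht)|].
    destruct X as [|y X]; [exfalso; exact (rules_nonempty [] HX eq_refl)|].
    destruct (IHt (padd x y) (HXt y (or_introl eq_refl))) as [a [Ha Hya]].
    exists a. split; [exact Ha|].
    eapply Relation_Operators.rt_trans; [|exact Hya].
    apply Relation_Operators.rt_step. repeat split.
    + exists (S t). right. exists (y :: X). auto.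
    + exists t. apply HXt. left; reflexivity.
    + apply adj_rule_base with (y :: X); simpl; auto.
Qed.

Lemma strongly_connected_closure (A T : pt -> Prop) :
  (forall x, A x -> T x) -> (forall x, T x -> closure U A x) ->
  strongly_connected U T -> strongly_connected U (closure U A).
Proof.
  intros HAT HTA HT x z Hx Hz.
  destruct (closure_link_seed A x Hx) as [a [Ha Hxa]].
  destruct (closure_link_seed A z Hz) as [c [Hc Hzc]].
  eapply Relation_Operators.rt_trans; [exact Hxa|].
  eapply Relation_Operators.rt_trans; [|apply link_sym; exact Hzc].
  apply link_mono with T; [exact HTA | apply HT; auto].
Qed.

End Connectivity.

(* An empty rule infects every site, so every direction would be unstable. *)
Lemma unbalanced_critical_rules_nonempty (U : update_family) :
  unbalanced_critical U -> forall X, In X U -> X <> [].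
Proof.
  intros [a [_ [_ [_ Hno_closed]]]] X HX ->. apply Hno_closed.
  exists (1, 0). split; [unfold direction; simpl; lra|].
  intros u _. left. intros Hstable.
  assert (H0 : closure U (halfplane u) (0%Z, 0%Z)).
  { exists 1%nat. right. exists []. split; [exact HX | intros y []]. }
  apply Hstable in H0. unfold halfplane in H0. simpl in H0. lra.
Qed.

Definition lclosure (U : update_family) (B : list pt) : pt -> Prop :=
  closure U (fun x => In x B).

Definition mergeable (U : update_family) (P : list (list pt)) : Prop :=
  exists B1 B2 rest a b, Permutation P (B1 :: B2 :: rest) /\
    lclosure U B1 a /\ lclosure U B2 b /\ adj U a b.

Definition connected_partition (U : update_family) (K : list pt)
  (P : list (list pt)) : Prop :=
  (forall B, In B P -> B <> [] /\ strongly_connected U (lclosure U B)) /\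
  (forall x, In x K <-> exists B, In B P /\ In x B) /\
  NoDup (concat P).

Lemma Permutation_of_two_members {A : Type} (P : list A) (B C : A) :
  In B P -> In C P -> B <> C -> exists rest, Permutation P (B :: C :: rest).
Proof.
  intros HB HC HBC. destruct (in_split _ _ HB) as [l1 [l2 ->]].
  assert (HC' : In C (l1 ++ l2)).
  { apply in_app_or in HC as [HC|[->|HC]]; apply in_or_app; tauto. }
  destruct (in_split _ _ HC') as [m1 [m2 Hm]].
  exists (m1 ++ m2).
  eapply Permutation_trans; [apply Permutation_sym, Permutation_middle|].
  rewrite Hm. apply perm_skip, Permutation_sym, Permutation_middle.
Qed.

Lemma Permutation_concat {A : Type} (P Q : list (list A)) :
  Permutation P Q -> Permutation (concat P) (concat Q).
Proof.
  induction 1 as [| B P Q _ IH | B C P | P Q R _ IH1 _ IH2]; simpl.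
  - constructor.
  - apply Permutation_app_head, IH.
  - rewrite !app_assoc. apply Permutation_app_tail, Permutation_app_comm.
  - eapply Permutation_trans; eauto.
Qed.

Lemma NoDup_app_disjoint {A : Type} (l m : list A) (x : A) :
  NoDup (l ++ m) -> In x l -> ~ In x m.
Proof.
  induction l as [|y l IHl]; simpl; intros Hnd Hl Hm; [exact Hl|].
  inversion Hnd as [|? ? Hy Hnd']; subst.
  destruct Hl as [<-|Hl]; [apply Hy, in_or_app; auto | exact (IHl Hnd' Hl Hm)].
Qed.

Section Partitions.

Variable U : update_family.
Hypothesis rules_nonempty : forall X, In X U -> X <> [].

Lemma unmergeable_block_unique (P : list (list pt)) (B C : list pt) (a b : pt) :
  ~ mergeable U P -> In B P -> In C P ->
  lclosure U B a -> lclosure U C b -> adj U a b -> B = C.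
Proof.
  intros Hnm HB HC Ha Hb Hab. apply NNPP. intros HBC. apply Hnm.
  destruct (Permutation_of_two_members P B C HB HC HBC) as [rest Hperm].
  exists B, C, rest, a, b. auto.
Qed.

Lemma closure_of_unmergeable (K : list pt) (P : list (list pt)) :
  ~ mergeable U P -> (forall x, In x K -> exists B, In B P /\ In x B) ->
  forall x, closure U (fun y => In y K) x -> exists B, In B P /\ lclosure U B x.
Proof.
  intros Hnm HK x [t Ht]. revert x Ht. induction t as [|t IHt]; simpl; intros x Ht.
  - destruct (HK x Ht) as [B [HB Hx]]. exists B. split; [exact HB|].
    apply closure_subset. exact Hx.
  - destruct Ht as [Ht|[X [HX HXt]]]; [exact (IHt x Ht)|].
    destruct X as [|y0 X0] eqn:EX; [exfalso; exact (rules_nonempty [] HX eq_refl)|].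
    rewrite <- EX in HX, HXt.
    assert (Hy0 : In y0 X) by (rewrite EX; left; reflexivity).
    destruct (IHt _ (HXt y0 Hy0)) as [B [HB Hxy0]].
    exists B. split; [exact HB|]. apply closure_rule with X; [exact HX|].
    intros y Hy. destruct (IHt _ (HXt y Hy)) as [C [HC Hxy]].
    replace B with C; [exact Hxy|].
    apply (unmergeable_block_unique P C B (padd x y) (padd x y0)); auto.
    apply adj_rule with X; simpl; auto.
Qed.

Lemma mergeable_of_connected_partition (K : list pt) (B1 B2 : list pt)
  (rest : list (list pt)) :
  strongly_connected U (closure U (fun x => In x K)) ->
  connected_partition U K (B1 :: B2 :: rest) -> mergeable U (B1 :: B2 :: rest).
Proof.
  intros HK [Hblocks [Hcover _]]. apply NNPP. intros Hnm.
  set (P := B1 :: B2 :: rest) in *.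
  assert (HB1 : In B1 P) by (left; reflexivity).
  assert (HB2 : In B2 P) by (right; left; reflexivity).
  destruct B1 as [|a B1']; [exact (proj1 (Hblocks _ HB1) eq_refl)|].
  destruct B2 as [|b B2']; [exact (proj1 (Hblocks _ HB2) eq_refl)|].
  assert (Ha : In a K) by (apply Hcover; exists (a :: B1'); simpl; auto).
  assert (Hb : In b K) by (apply Hcover; exists (b :: B2'); simpl; auto).
  assert (Hstay : forall z w, link U (closure U (fun x => In x K)) z w ->
                  lclosure U (a :: B1') z -> lclosure U (a :: B1') w).
  { induction 1 as [z w [_ [Hw Hzw]]| |]; auto. intros Hz.
    destruct (closure_of_unmergeable K P Hnm (fun x => proj1 (Hcover x)) w Hw)
      as [C [HC Hwc]].
    replace (a :: B1') with C; [exact Hwc|].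
    symmetry. exact (unmergeable_block_unique P _ C z w Hnm HB1 HC Hz Hwc Hzw). }
  apply Hnm. exists (a :: B1'), (b :: B2'), rest, b, b. repeat split.
  - apply Permutation_refl.
  - apply (Hstay a b).
    + apply HK; apply closure_subset; assumption.
    + apply closure_subset. left; reflexivity.
  - apply closure_subset. left; reflexivity.
  - apply adj_refl.
Qed.

Lemma connected_partition_perm (K : list pt) (P Q : list (list pt)) :
  Permutation P Q -> connected_partition U K P -> connected_partition U K Q.
Proof.
  intros Hperm [Hblocks [Hcover Hnd]]. split; [|split].
  - intros B HB. apply Hblocks, Permutation_in with Q; [|exact HB].
    apply Permutation_sym, Hperm.
  - intros x. rewrite Hcover.
    split; intros [B [HB Hx]]; exists B; (split; [|exact Hx]).
    + exact (Permutation_in B Hperm HB).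
    + exact (Permutation_in B (Permutation_sym Hperm) HB).
  - eapply Permutation_NoDup; [apply Permutation_concat, Hperm | exact Hnd].
Qed.

Lemma connected_partition_merge (K : list pt) (B1 B2 : list pt)
  (rest : list (list pt)) (a b : pt) :
  connected_partition U K (B1 :: B2 :: rest) ->
  lclosure U B1 a -> lclosure U B2 b -> adj U a b ->
  connected_partition U K ((B1 ++ B2) :: rest).
Proof.
  intros [Hblocks [Hcover Hnd]] Ha Hb Hab.
  destruct (Hblocks B1 (or_introl eq_refl)) as [HB1 HscB1].
  destruct (Hblocks B2 (or_intror (or_introl eq_refl))) as [_ HscB2].
  split; [|split].
  - intros B [<-|HB]; [|apply Hblocks; simpl; auto]. split.
    + destruct B1; [contradiction | discriminate].
    + apply strongly_connected_closure
        with (fun x => lclosure U B1 x \/ lclosure U B2 x); [exact rules_nonempty | | |].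
      * intros x Hx. apply in_app_or in Hx as [Hx|Hx]; [left|right];
          apply closure_subset; exact Hx.
      * intros x [Hx|Hx]; eapply closure_mono; try exact Hx;
          intros y Hy; apply in_or_app; auto.
      * exact (strongly_connected_union U _ _ a b HscB1 HscB2 Ha Hb Hab).
  - intros x. rewrite Hcover. split.
    + intros [B [[<-|[<-|HB]] Hx]].
      * exists (B1 ++ B2). split; [left; reflexivity | apply in_or_app; auto].
      * exists (B1 ++ B2). split; [left; reflexivity | apply in_or_app; auto].
      * exists B. split; [right; exact HB | exact Hx].
    + intros [B [[<-|HB] Hx]].
      * apply in_app_or in Hx as [Hx|Hx];
          [exists B1 | exists B2]; split; simpl; auto.
      * exists B. simpl. auto.
  - simpl in *. rewrite <- app_assoc. exact Hnd.
Qed.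

Lemma connected_partition_singletons (K : list pt) :
  NoDup K -> connected_partition U K (map (fun x => [x]) K).
Proof.
  intros Hnd. split; [|split].
  - intros B HB. apply in_map_iff in HB as [x [<- Hx]]. split; [discriminate|].
    apply strongly_connected_closure with (fun z => z = x); [exact rules_nonempty | | |].
    + intros z [<-|[]]. reflexivity.
    + intros z ->. apply closure_subset. left; reflexivity.
    + intros z w -> ->. apply Relation_Operators.rt_refl.
  - intros x. split.
    + intros Hx. exists [x]. split; [apply in_map_iff; exists x; auto | left; auto].
    + intros [B [HB Hx]]. apply in_map_iff in HB as [y [<- Hy]].
      destruct Hx as [<-|[]]. exact Hy.
  - replace (concat (map (fun x => [x]) K)) with K; [exact Hnd|].
    induction K as [|x K IHK]; simpl; [reflexivity|].
    inversion Hnd; subst. f_equal. auto.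
Qed.

Lemma connected_partition_merge_to_two (K : list pt) :
  strongly_connected U (closure U (fun x => In x K)) ->
  forall n P, length P = S (S n) -> connected_partition U K P ->
  exists K1 K2 a b, connected_partition U K [K1; K2] /\
    lclosure U K1 a /\ lclosure U K2 b /\ adj U a b.
Proof.
  intros HK n. induction n as [|n IHn]; intros P Hlen HP;
    destruct P as [|B1 [|B2 rest]]; try discriminate;
    destruct (mergeable_of_connected_partition K B1 B2 rest HK HP)
      as [C1 [C2 [rest' [a [b [Hperm [Ha [Hb Hab]]]]]]]].
  - destruct rest' as [|C rest'];
      [|apply Permutation_length in Hperm; simpl in *; lia].
    exists C1, C2, a, b.
    exact (conj (connected_partition_perm K _ _ Hperm HP) (conj Ha (conj Hb Hab))).
  - apply (IHn ((C1 ++ C2) :: rest')).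
    + apply Permutation_length in Hperm. simpl in *. lia.
    + apply connected_partition_merge with a b; auto.
      exact (connected_partition_perm K _ _ Hperm HP).
Qed.

End Partitions.

Theorem mainTheorem12 (U : update_family) (K : list pt) :
  valid_family U ->
  unbalanced_critical U ->
  NoDup K -> (2 <= length K)%nat ->
  strongly_connected U (closure U (fun x => In x K)) ->
  exists K1 K2 : list pt,
    K1 <> [] /\ K2 <> [] /\
    (forall x, In x K <-> (In x K1 \/ In x K2)) /\
    (forall x, In x K1 -> ~ In x K2) /\
    strongly_connected U (closure U (fun x => In x K1)) /\
    strongly_connected U (closure U (fun x => In x K2)) /\
    strongly_connected U
      (fun x => closure U (fun y => In y K1) x \/ closure U (fun y => In y K2) x).
Proof.
  intros _ Hcrit Hnd Hlen HK.
  pose proof (unbalanced_critical_rules_nonempty U Hcrit) as Hne.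
  destruct (length K) as [|[|n]] eqn:HlenK; [lia | lia |].
  destruct (connected_partition_merge_to_two U Hne K HK n (map (fun x => [x]) K))
    as [K1 [K2 [a [b [[Hblocks [Hcover Hnd12]] [Ha [Hb Hab]]]]]]].
  - rewrite length_map. exact HlenK.
  - exact (connected_partition_singletons U Hne K Hnd).
  - destruct (Hblocks K1 (or_introl eq_refl)) as [HK1 Hsc1].
    destruct (Hblocks K2 (or_intror (or_introl eq_refl))) as [HK2 Hsc2].
    exists K1, K2. repeat split; auto.
    + intros Hx. apply Hcover in Hx as [B [[<-|[<-|[]]] Hx]]; auto.
    + intros [Hx|Hx]; apply Hcover; eexists; split; try exact Hx; simpl; auto.
    + intros x Hx. simpl in Hnd12. rewrite app_nil_r in Hnd12.
      exact (NoDup_app_disjoint K1 K2 x Hnd12 Hx).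
    + exact (strongly_connected_union U _ _ a b Hsc1 Hsc2 Ha Hb Hab).
Qed.
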